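(* Let $K\ge1$, $p_1,\dots,p_K>0$, $c_1,\dots,c_K>0$, and let $\bar B=\frac12\sum_{k=1}^Kp_kc_k$. For $B>0$ consider the problem $$\max_{\mathbf{a}}\ -\sum_{k=1}^K\big[(p_k-a_k)\log(p_k-a_k)+a_k\log a_k\big]\quad\text{s.t.}\quad\sum_{k=1}^Ka_kc_k\le B,\ \ 0\le a_k\le p_k\ \forall k.$$ There is a unique function $\lambda(B)\ge0$, which is one-to-one for $0<B\le\bar B$ and satisfies $\lambda(B)=0$ for $B\ge\bar B$, such that the problem has a unique solution, given by $$a^*_k(B)=\frac{p_k}{1+\exp[\lambda(B)c_k]},\qquad k\in[K].$$
   Context: Here $0\log 0=0$. In the paper $p_k$ is the average (per vertex) number of vertex pairs at distance scale $k$ and $c_k$ the cost of a pair at scale $k$. *)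

From HB Require Import structures.
From mathcomp Require Import all_boot all_order all_algebra.
From mathcomp Require Import all_classical all_reals all_analysis.
Set Implicit Arguments. Unset Strict Implicit. Unset Printing Implicit Defensive.
Import Order.TTheory GRing.Theory Num.Theory.
Local Open Scope ring_scope.

Definition xlogx {R : realType} (x : R) : R := if x == 0 then 0 else x * ln x.

Definition objective {R : realType} (K : nat) (p a : 'I_K -> R) : R :=
  - \sum_(k < K) (xlogx (p k - a k) + xlogx (a k)).

Definition feasible {R : realType} (K : nat) (p c : 'I_K -> R) (B : R)
  (a : 'I_K -> R) : Prop :=
  \sum_(k < K) a k * c k <= B /\ (forall k, 0 <= a k <= p k).

Definition is_solution {R : realType} (K : nat) (p c : 'I_K -> R) (B : R)
  (a : 'I_K -> R) : Prop :=
  feasible p c B a /\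
  (forall b, feasible p c B b -> objective p b <= objective p a).

Definition is_unique_solution {R : realType} (K : nat) (p c : 'I_K -> R) (B : R)
  (a : 'I_K -> R) : Prop :=
  is_solution p c B a /\ (forall b, is_solution p c B b -> b = a).

Definition astar {R : realType} (K : nat) (p c : 'I_K -> R) (l : R) : 'I_K -> R :=
  fun k => p k / (1 + expR (l * c k)).

Definition Bbar {R : realType} (K : nat) (p c : 'I_K -> R) : R :=
  2^-1 * \sum_(k < K) p k * c k.

Definition good_lambda {R : realType} (K : nat) (p c : 'I_K -> R)
  (lam : R -> R) : Prop :=
  (forall B, 0 < B -> 0 <= lam B) /\
  (forall B1 B2, 0 < B1 -> B1 <= Bbar p c -> 0 < B2 -> B2 <= Bbar p c ->
      lam B1 = lam B2 -> B1 = B2) /\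
  (forall B, Bbar p c <= B -> lam B = 0) /\
  (forall B, 0 < B -> is_unique_solution p c B (astar p c (lam B))).

(* The objective is a sum of binary entropies and [astar p c l] is the
   stationary point of the Lagrangian with multiplier [l >= 0].  Measuring
   how far xlogx lies above its tangents, the Lagrangian gap of any feasible
   [b] is a sum of nonnegative tangent gaps vanishing only at [b = astar p c l];
   with complementary slackness this makes [astar p c l] the unique maximiser.
   The multiplier is [0] when [B >= Bbar = budget 0]; otherwise the budget
   [l |-> sum_k astar p c l k * c k] is continuous and tends to [0], and the
   intermediate value theorem yields [l > 0] with budget exactly [B].  Since
   [astar p c] is injective, the multiplier is unique. *)

From HB Require Import structures.
From mathcomp Require Import all_boot all_order all_algebra.
From mathcomp Require Import all_classical all_reals all_analysis.
From mathcomp Require Import ring lra.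

Set Implicit Arguments.
Unset Strict Implicit.
Unset Printing Implicit Defensive.

Import Order.TTheory GRing.Theory Num.Theory.
Import numFieldNormedType.Exports.
Local Open Scope ring_scope.

Section xlogx_gap.
Context {R : realType}.
Implicit Types x y : R.

Lemma xlogxE_gt0 x : 0 < x -> xlogx x = x * ln x.
Proof. by move=> x0; rewrite /xlogx gt_eqF. Qed.

Definition xlogx_gap x y := xlogx y - xlogx x - (ln x + 1) * (y - x).

Lemma xlogx_gap0 x : 0 < x -> xlogx_gap x 0 = x.
Proof. by move=> x0; rewrite /xlogx_gap /xlogx eqxx gt_eqF //; ring. Qed.

Lemma xlogx_gapE x y : 0 < x -> 0 < y ->
  xlogx_gap x y = y * (expR (ln x - ln y) - 1 - (ln x - ln y)).
Proof.
move=> x0 y0; have yexp : y * expR (ln x - ln y) = x.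
  by rewrite expRB !lnK ?posrE // mulrC divfK ?gt_eqF.
by rewrite /xlogx_gap !xlogxE_gt0 // !mulrBr yexp; ring.
Qed.

Lemma xlogx_gap_ge0 x y : 0 < x -> 0 <= y -> 0 <= xlogx_gap x y.
Proof.
move=> x0; rewrite le_eqVlt => /predU1P[<-|y0]; first by rewrite xlogx_gap0 // ltW.
rewrite xlogx_gapE //; apply: mulr_ge0; first exact: ltW.
by rewrite subr_ge0 lerBrDl expR_ge1Dx.
Qed.

Lemma xlogx_gap_eq0 x y : 0 < x -> 0 <= y -> xlogx_gap x y = 0 -> y = x.
Proof.
move=> x0; rewrite le_eqVlt => /predU1P[<-|y0].
  by rewrite xlogx_gap0 // => x_eq0; rewrite x_eq0 ltxx in x0.
rewrite xlogx_gapE // => /eqP; rewrite mulf_eq0 gt_eqF //= subr_eq0 => /eqP gap0.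
have lnxy : ln x - ln y = 0.
  apply: contra_eq gap0 => /expR_gt1Dx; lra.
by apply: ln_inj; rewrite ?posrE //; apply/eqP; rewrite eq_sym -subr_eq0 lnxy.
Qed.

(* The hypothesis is stationarity of the Lagrangian at [a] with multiplier
   term [t]; it makes the linear parts of the two tangent gaps cancel. *)
Lemma entropy_gapE (p a b t : R) : ln (p - a) = ln a + t ->
  (xlogx (p - b) + xlogx b) - (xlogx (p - a) + xlogx a) + t * (b - a) =
  xlogx_gap a b + xlogx_gap (p - a) (p - b).
Proof. by move=> lnpa; rewrite /xlogx_gap lnpa; ring. Qed.

End xlogx_gap.

Section logistic_share.
Context {R : realType} (p t : R).
Hypothesis p0 : 0 < p.

Let a := p / (1 + expR t).

Let den_gt0 : 0 < 1 + expR t.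
Proof. by rewrite ltr_pwDl ?expR_gt0. Qed.

Lemma logistic_share_gt0 : 0 < a.
Proof. by rewrite divr_gt0. Qed.

Lemma sub_logistic_share : p - a = a * expR t.
Proof. by rewrite /a; field; rewrite gt_eqF. Qed.

Lemma logistic_share_lt : a < p.
Proof.
by rewrite -subr_gt0 sub_logistic_share mulr_gt0 ?logistic_share_gt0 ?expR_gt0.
Qed.

Lemma ln_sub_logistic_share : ln (p - a) = ln a + t.
Proof.
by rewrite sub_logistic_share lnM ?posrE ?logistic_share_gt0 ?expR_gt0 // expRK.
Qed.

End logistic_share.

Lemma continuous_logistic_share_scaled {R : realType} (p c : R) :
  continuous (fun l : R => p / (1 + expR (l * c)) * c).
Proof.
move=> l.
apply: (@continuousM R R (fun l => p / (1 + expR (l * c))) (fun=> c));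
  last exact: cst_continuous.
apply: (@continuousM R R (fun=> p)); first exact: cst_continuous.
apply: continuousV; first by rewrite gt_eqF // ltr_pwDl ?expR_gt0.
apply: (@continuousD R R R (fun=> 1)); first exact: cst_continuous.
have mulc : {for l, continuous (fun l : R => l * c)}.
  by apply: (@continuousM R R id (fun=> c)); [exact: cvg_id | exact: cst_continuous].
apply: (@continuous_comp _ _ _ (fun l : R => l * c) expR l mulc).
exact: continuous_expR.
Qed.

Section entropy_problem.
Context {R : realType} {K : nat} (p c : 'I_K -> R).
Hypothesis p_gt0 : forall k, 0 < p k.

Definition budget (l : R) : R := \sum_(k < K) astar p c l k * c k.

Lemma feasible_astar B l : budget l <= B -> feasible p c B (astar p c l).
Proof.
split=> // k; apply/andP; split; apply: ltW.
  exact: logistic_share_gt0.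
exact: logistic_share_lt.
Qed.

Lemma objective_astar_gap B l b : 0 <= l -> l * (B - budget l) = 0 ->
  feasible p c B b ->
  \sum_(k < K) (xlogx_gap (astar p c l k) (b k) +
                xlogx_gap (p k - astar p c l k) (p k - b k))
  <= objective p (astar p c l) - objective p b.
Proof.
move=> l0 slack [bB _].
have -> : \sum_(k < K) (xlogx_gap (astar p c l k) (b k) +
                       xlogx_gap (p k - astar p c l k) (p k - b k)) =
    objective p (astar p c l) - objective p b +
    l * (\sum_(k < K) b k * c k - budget l).
  under eq_bigr => k _
    do rewrite -(entropy_gapE (b k) (ln_sub_logistic_share (l * c k) (p_gt0 k))).
  rewrite big_split sumrB /=.
  rewrite (_ : \sum_(k < K) l * c k * _ = l * (\sum_(k < K) b k * c k - budget l)).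
    by rewrite /objective /budget /astar; ring.
  by rewrite mulrBr !mulr_sumr -sumrB; apply: eq_bigr => k _; rewrite /astar; ring.
have -> : l * (\sum_(k < K) b k * c k - budget l) =
    l * (\sum_(k < K) b k * c k - B) + l * (B - budget l) by ring.
by rewrite slack addr0 gerDl mulr_ge0_le0 // subr_le0.
Qed.

Lemma astar_unique_solution B l : 0 <= l -> budget l <= B ->
  l * (B - budget l) = 0 -> is_unique_solution p c B (astar p c l).
Proof.
move=> l0 aB slack; set a := astar p c l.
pose gap b k := xlogx_gap (a k) (b k) + xlogx_gap (p k - a k) (p k - b k).
have a_gt0 k : 0 < a k by exact: logistic_share_gt0.
have pa_gt0 k : 0 < p k - a k by rewrite subr_gt0; exact: logistic_share_lt.
have gap_parts_ge0 b k : feasible p c B b ->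
    0 <= xlogx_gap (a k) (b k) /\ 0 <= xlogx_gap (p k - a k) (p k - b k).
  move=> [_ /(_ k) /andP[b0 bp]].
  by split; apply: xlogx_gap_ge0; rewrite ?subr_ge0 ?a_gt0 ?pa_gt0.
have gap_ge0 b k : feasible p c B b -> 0 <= gap b k.
  by move=> /(gap_parts_ge0 b k)[]; exact: addr_ge0.
have sum_gap_ge0 b : feasible p c B b -> 0 <= \sum_(k < K) gap b k.
  by move=> fb; apply: sumr_ge0 => k _; exact: gap_ge0.
split.
  split; first exact: feasible_astar.
  move=> b fb; rewrite -subr_ge0.
  exact: le_trans (sum_gap_ge0 b fb) (objective_astar_gap l0 slack fb).
move=> b [fb b_max]; apply: funext => k.
have sum_gap0 : \sum_(k < K) gap b k = 0.
  apply/eqP; rewrite eq_le sum_gap_ge0 // andbT.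
  apply: le_trans (objective_astar_gap l0 slack fb) _.
  by rewrite subr_le0; apply: b_max; exact: feasible_astar.
have [gap1_ge0 gap2_ge0] := gap_parts_ge0 b k fb.
move: sum_gap0 => /(psumr_eq0P (fun k _ => gap_ge0 b k fb))/(_ k isT)/eqP.
rewrite paddr_eq0 // => /andP[/eqP/xlogx_gap_eq0 -> //].
by have [_ /(_ k) /andP[]] := fb.
Qed.

Lemma budget0 : budget 0 = Bbar p c.
Proof.
rewrite /budget /Bbar mulr_sumr; apply: eq_bigr => k _.
by rewrite /astar mul0r expR0; field.
Qed.

Lemma continuous_budget : continuous budget.
Proof.
rewrite /budget; apply: continuous_big; first exact: add_continuous.
move=> k _; exact: continuous_logistic_share_scaled.
Qed.

Lemma budget_le L : 0 < L -> budget L <= (\sum_(k < K) p k) / L.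
Proof.
move=> L0; rewrite /budget mulr_suml; apply: ler_sum => k _.
have den_gt0 : 0 < 1 + expR (L * c k) by rewrite ltr_pwDl ?expR_gt0.
rewrite /astar ler_pdivlMr // -[leRHS]mulr1 -!mulrA ler_pM2l ?p_gt0 //.
rewrite mulrC ler_pdivrMr // mul1r.
by have := expR_ge1Dx (L * c k); have := expR_gt0 (L * c k); lra.
Qed.

Lemma budget_root B : 0 < B -> B < Bbar p c -> exists2 l, 0 <= l & budget l = B.
Proof.
move=> B0 B_lt; set S := \sum_(k < K) p k.
have S0 : 0 <= S by apply: sumr_ge0 => k _; exact: ltW.
pose L := 2 * (S + 1) / B.
have L0 : 0 < L by rewrite divr_gt0 //; lra.
have budgetL : budget L < B.
  apply: le_lt_trans (budget_le L0) _.
  rewrite ltr_pdivrMr // [B * L]mulrC divfK ?gt_eqF // -/S; lra.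
have [l] : exists2 l, l \in `[0, L] & budget l = B.
  apply: IVT; first exact: ltW.
    exact: continuous_subspaceT continuous_budget.
  rewrite budget0 (min_idPr _) ?(max_idPl _); lra.
by rewrite in_itv /= => /andP[l0 _]; exists l.
Qed.

Lemma exists_multiplier B : exists l, [/\ 0 <= l,
  0 < B -> is_unique_solution p c B (astar p c l),
  0 < B -> B <= Bbar p c -> budget l = B &
  Bbar p c <= B -> l = 0].
Proof.
have [Bbar_le | B_lt] := leP (Bbar p c) B.
  exists 0; split=> // [_ | _ B_le].
    by apply: astar_unique_solution; rewrite ?budget0 ?mul0r.
  by rewrite budget0; apply/eqP; rewrite eq_le B_le Bbar_le.
have [B0 | B_le0] := ltP 0 B; last first.
  by exists 0; split=> // B0; rewrite leNgt B0 in B_le0.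
have [l l0 budget_l] := budget_root B0 B_lt.
exists l; split=> // _.
by apply: astar_unique_solution; rewrite ?budget_l ?subrr ?mulr0.
Qed.

Lemma astar_inj k : c k != 0 -> injective (astar p c).
Proof.
move=> ck0 l1 l2 /(congr1 (fun a => a k)); rewrite /astar.
move/(mulfI (lt0r_neq0 (p_gt0 k)))/invr_inj/addrI/expR_inj.
exact: mulIf.
Qed.

End entropy_problem.

Theorem lemma2 (R : realType) (K : nat) (p c : 'I_K -> R)
  (hK : (1 <= K)%N) (hp : forall k, 0 < p k) (hc : forall k, 0 < c k) :
  exists lam : R -> R,
    good_lambda p c lam /\
    (forall lam' : R -> R, good_lambda p c lam' ->
       forall B, 0 < B -> lam' B = lam B).
Proof.
have [lam lamP] := choice (exists_multiplier c hp).
have lam_sol B : 0 < B -> is_unique_solution p c B (astar p c (lam B)).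
  by case: (lamP B).
exists lam; split.
  split; first by move=> B _; case: (lamP B).
  split.
    move=> B1 B2 B1_gt0 B1_le B2_gt0 B2_le lam_eq.
    have [_ _ <- // _] := lamP B1; have [_ _ <- // _] := lamP B2.
    by rewrite lam_eq.
  by split; [move=> B; case: (lamP B) | exact: lam_sol].
move=> lam' [_ [_ [_ lam'_sol]]] B B_gt0.
apply: (astar_inj hp (lt0r_neq0 (hc (Ordinal hK)))).
exact: (lam_sol B B_gt0).2 _ (lam'_sol B B_gt0).1.
Qed.
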